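(* Let $\Phi\colon\mathcal{M}(2;\mathbb{C})\dashrightarrow\mathcal{M}(2;\mathbb{C})$ be a rational map compatible with conjugation. Then $\Phi$ preserves the fibration in $2$-planes $\mathcal{P}$ fiber by fiber, i.e. for generic $\mathrm{M}$, $\Phi(\mathrm{M})\in\mathcal{P}(\mathrm{M})$.
   Context: $\mathcal{C}=\{\lambda\mathrm{Id}:\lambda\in\mathbb{C}\}$. For $\mathrm{M}\in\mathcal{M}(2;\mathbb{C})\setminus\mathcal{C}$, $\mathcal{P}(\mathrm{M})$ is the unique $2$-plane containing $\mathrm{M}$ and $\mathcal{C}$, namely $\{s\mathrm{M}+t\mathrm{Id}\}$ (equivalently the set of matrices commuting with $\mathrm{M}$). $\Phi$ is compatible with conjugation if $\mathrm{A}\Phi(\mathrm{M})\mathrm{A}^{-1}=\Phi(\mathrm{A}\mathrm{M}\mathrm{A}^{-1})$ for all $\mathrm{A}\in\mathrm{GL}(2;\mathbb{C})$ whenever both sides are defined. *)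

(* C is modelled as R[i] (complex numbers over a real
   closed field) for an arbitrary model R : realType of the real numbers. *)
From mathcomp Require Import all_boot all_algebra.
From mathcomp Require Import reals.
From mathcomp.real_closed Require Import complex.
From mathcomp Require Import mpoly.

Set Implicit Arguments. Unset Strict Implicit. Unset Printing Implicit Defensive.
Local Open Scope ring_scope.

(* coordinates of a 2x2 matrix: (m00, m01, m10, m11) *)
Definition mxcoords (F : nzRingType) (M : 'M[F]_2) : 'I_4 -> F :=
  fun k => M (inord (k %/ 2)) (inord (k %% 2)).

Definition peval (F : comNzRingType) (p : mpoly.mpoly 4 F) (M : 'M[F]_2) : F :=
  mpoly.meval (mxcoords M) p.

(* the rational map Phi = (1/Q) * (P_ij), evaluated at M (meaningful where Q(M) != 0) *)
Definition ratmap_eval (F : fieldType) (P : 'I_2 -> 'I_2 -> mpoly.mpoly 4 F)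
  (Q : mpoly.mpoly 4 F) (M : 'M[F]_2) : 'M[F]_2 :=
  (peval Q M)^-1 *: \matrix_(i, j) peval (P i j) M.

Definition ratmap_defined (F : fieldType) (Q : mpoly.mpoly 4 F) (M : 'M[F]_2) : Prop :=
  peval Q M != 0.

Definition is_scalar (F : nzRingType) (M : 'M[F]_2) : Prop := exists l : F, M = l%:M.

(* N belongs to the 2-plane P(M) = { s M + t Id } *)
Definition in_plane (F : nzRingType) (M N : 'M[F]_2) : Prop :=
  exists s t : F, N = s *: M + t%:M.

Definition compatible_conj (F : fieldType) (P : 'I_2 -> 'I_2 -> mpoly.mpoly 4 F)
  (Q : mpoly.mpoly 4 F) : Prop :=
  forall (A M : 'M[F]_2), A \in unitmx ->
    ratmap_defined Q M -> ratmap_defined Q (A *m M *m invmx A) ->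
    A *m ratmap_eval P Q M *m invmx A = ratmap_eval P Q (A *m M *m invmx A).

From mathcomp Require Import all_boot all_algebra.
From mathcomp Require Import reals.
From mathcomp.real_closed Require Import complex.
From mathcomp Require Import mpoly.
From mathcomp Require Import ring.
Set Implicit Arguments. Unset Strict Implicit. Unset Printing Implicit Defensive.
Local Open Scope ring_scope.
Import GRing.Theory Num.Theory.

(* Conjugating by an invertible A that commutes with M fixes M, so compatibility
   forces A to commute with Phi(M).  Taking A = M - x Id with x not an
   eigenvalue of M, Phi(M) commutes with M.  When the entry m01 of M is nonzero,
   the commutant of M is exactly the plane P(M); hence the generic condition
   Q(M) m01 != 0. *)

Lemma mpolyXU_neq0 (n : nat) (R : nzRingType) (i : 'I_n) : 'X_i != 0 :> {mpoly R[n]}.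
Proof. by rewrite -msupp_eq0 msuppX. Qed.

Lemma pevalM (F : comNzRingType) (p q : {mpoly F[4]}) (M : 'M[F]_2) :
  peval (p * q) M = peval p M * peval q M.
Proof. exact: mevalM. Qed.

Lemma peval_X01 (F : comNzRingType) (M : 'M[F]_2) : peval 'X_(inord 1) M = M 0 1.
Proof.
rewrite /peval mevalXU /mxcoords inordK //.
by congr (M _ _); apply: val_inj; rewrite /= inordK.
Qed.

Lemma mulmx2E (F : pzSemiRingType) (A B : 'M[F]_2) i j :
  (A *m B) i j = A i 0 * B 0 j + A i 1 * B 1 j.
Proof.
rewrite mxE big_ord_recr big_ord1.
by congr (A i _ * B _ j + A i _ * B _ j); apply: val_inj.
Qed.

Lemma exists_unit_shift (F : numFieldType) n (M : 'M[F]_n) :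
  exists x : F, M - x%:M \in unitmx.
Proof.
pose rs := [seq i%:R : F | i <- iota 0 n.+1].
have rs_uniq : uniq rs.
  by rewrite map_inj_uniq ?iota_uniq // => i j /eqP; rewrite eqr_nat => /eqP.
have cM_neq0 : char_poly M != 0 by rewrite -size_poly_eq0 size_char_poly.
have : ~~ all (root (char_poly M)) rs.
  apply/negP => all_roots; have := max_poly_roots cM_neq0 all_roots rs_uniq.
  by rewrite size_char_poly size_map size_iota ltnn.
case/allPn => x _ not_root; exists x.
move: not_root; rewrite -eigenvalue_root_char /eigenvalue /eigenspace negbK.
by rewrite kermx_eq0 row_free_unit.
Qed.

Lemma comm_mx_subr_scalar (F : comPzRingType) n (M N : 'M[F]_n) (x : F) :
  comm_mx (M - x%:M) N -> comm_mx M N.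
Proof.
move=> /comm_mx_sym cNM; apply/comm_mx_sym.
by rewrite -(subrK x%:M M); apply: comm_mxD cNM (comm_mx_scalar _ _).
Qed.

Lemma comm_mx2_row0_eq0 (F : fieldType) (M D : 'M[F]_2) :
  M 0 1 != 0 -> comm_mx M D -> D 0 0 = 0 -> D 0 1 = 0 -> D = 0.
Proof.
move=> M01 cMD D00 D01.
have entry i j : (M *m D) i j = (D *m M) i j by rewrite cMD.
have D10 : D 1 0 = 0.
  move: (entry 0 0); rewrite !mulmx2E D00 D01 !(mulr0, mul0r, add0r) => /eqP.
  by rewrite mulf_eq0 (negPf M01) => /eqP.
have D11 : D 1 1 = 0.
  move: (entry 0 1); rewrite !mulmx2E D00 D01 !(mulr0, mul0r, add0r, addr0).
  by move/eqP; rewrite mulf_eq0 (negPf M01) => /eqP.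
apply/matrixP => i j; rewrite mxE; case: i j => [[|[|//]] ?] [[|[|//]] ?];
  [rewrite -D00 | rewrite -D01 | rewrite -D10 | rewrite -D11].
all: by congr (D _ _); apply: val_inj.
Qed.

Lemma comm_mx2_in_plane (F : fieldType) (M N : 'M[F]_2) :
  M 0 1 != 0 -> comm_mx M N -> in_plane M N.
Proof.
move=> M01 cMN; pose s := N 0 1 / M 0 1; pose t := N 0 0 - s * M 0 0.
exists s, t; apply/eqP; rewrite -subr_eq0; apply/eqP.
apply: comm_mx2_row0_eq0 (M01) _ _ _.
- rewrite /comm_mx mulmxBr mulmxBl cMN mulmxDr mulmxDl -scalemxAr -scalemxAl.
  by rewrite scalar_mxC.
- by rewrite !mxE /= mulr1n /t; ring.
- by rewrite !mxE /= mulr0n addr0 /s (divfK M01) subrr.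
Qed.

Lemma compatible_conj_comm_mx (F : fieldType) (P : 'I_2 -> 'I_2 -> {mpoly F[4]})
    (Q : {mpoly F[4]}) (A M : 'M[F]_2) :
  compatible_conj P Q -> A \in unitmx -> comm_mx A M -> ratmap_defined Q M ->
  comm_mx A (ratmap_eval P Q M).
Proof.
move=> compatPQ A_unit cAM QM.
have conjAM : A *m M *m invmx A = M by rewrite cAM mulmxK.
have := compatPQ A M A_unit QM; rewrite conjAM => /(_ QM) conj_eval.
by rewrite /comm_mx -[in RHS]conj_eval mulmxKV.
Qed.

Theorem proposition2p16 (R : realType)
  (P : 'I_2 -> 'I_2 -> mpoly.mpoly 4 R[i]) (Q : mpoly.mpoly 4 R[i]) :
  Q != 0 ->
  compatible_conj P Q ->
  exists G : mpoly.mpoly 4 R[i], G != 0 /\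
    forall M : 'M[R[i]]_2, peval G M != 0 ->
      ~ is_scalar M /\ ratmap_defined Q M /\ in_plane M (ratmap_eval P Q M).
Proof.
move=> Q_neq0 compatPQ; exists (Q * 'X_(inord 1)).
split=> [|M]; first by rewrite mulf_neq0 ?mpolyXU_neq0.
rewrite pevalM peval_X01 mulf_eq0 negb_or.
case/andP=> QM M01; split; last split=> //.
  by case=> l M_scalar; move: M01; rewrite M_scalar mxE mulr0n eqxx.
have [x unit_shift] := exists_unit_shift M.
apply: comm_mx2_in_plane M01 _; apply: (comm_mx_subr_scalar (x := x)).
apply: (compatible_conj_comm_mx compatPQ unit_shift) => //.
by rewrite /comm_mx mulmxBr mulmxBl scalar_mxC.
Qed.
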